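(* Let $\gamma_a,\gamma_s>0$, $\lambda\ge 0$, $q>0$, $\sigma_B>0$, $\varepsilon_a\in(0,2)$, let $\beta_a,\beta_s:\mathbb R\to\mathbb R$ be globally Lipschitz continuous with $\beta_a\ge0$, $\beta_s>0$, and let $T_a^{(0)}\ge 0$, $T_s^{(0)}\ge 0$. Then the solution of \[ \begin{cases} \gamma_a T_a'=-\lambda(T_a-T_s)+\varepsilon_a\sigma_B|T_s|^3T_s-2\varepsilon_a\sigma_B|T_a|^3T_a+q\beta_a(T_a),\\ \gamma_s T_s'=-\lambda(T_s-T_a)-\sigma_B|T_s|^3T_s+\varepsilon_a\sigma_B|T_a|^3T_a+q\beta_s(T_s),\\ T_a(0)=T_a^{(0)},\quad T_s(0)=T_s^{(0)} \end{cases} \] converges, as $t\to+\infty$, to an equilibrium point of this system (a zero of its right-hand side). *)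

From Stdlib Require Import Reals.
From Coquelicot Require Import Coquelicot.
Open Scope R_scope.

Definition globally_lipschitz (f : R -> R) : Prop :=
  exists L : R, 0 <= L /\ forall x y : R, Rabs (f x - f y) <= L * Rabs (x - y).

Definition rhs_a (lam q sigB epsa : R) (beta_a : R -> R) (Ta Ts : R) : R :=
  - lam * (Ta - Ts) + epsa * sigB * (Rabs Ts ^ 3 * Ts)
  - 2 * epsa * sigB * (Rabs Ta ^ 3 * Ta) + q * beta_a Ta.

Definition rhs_s (lam q sigB epsa : R) (beta_s : R -> R) (Ta Ts : R) : R :=
  - lam * (Ts - Ta) - sigB * (Rabs Ts ^ 3 * Ts)
  + epsa * sigB * (Rabs Ta ^ 3 * Ta) + q * beta_s Ts.

Definition is_solution (ga gs lam q sigB epsa : R) (beta_a beta_s : R -> R)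
    (Ta0 Ts0 : R) (Ta Ts : R -> R) : Prop :=
  Ta 0 = Ta0 /\ Ts 0 = Ts0 /\
  filterlim Ta (at_right 0) (locally Ta0) /\
  filterlim Ts (at_right 0) (locally Ts0) /\
  (forall t : R, 0 < t ->
     is_derive Ta t (rhs_a lam q sigB epsa beta_a (Ta t) (Ts t) / ga) /\
     is_derive Ts t (rhs_s lam q sigB epsa beta_s (Ta t) (Ts t) / gs)).

Definition is_equilibrium (lam q sigB epsa : R) (beta_a beta_s : R -> R)
    (a s : R) : Prop :=
  rhs_a lam q sigB epsa beta_a a s = 0 /\ rhs_s lam q sigB epsa beta_s a s = 0.

(* On bounded sets the vector field is cooperative: each component is Lipschitz in its own
   variable and nondecreasing in the other.  For a cooperative planar system the squared
   negative parts min(u,0)^2 + min(v,0)^2 of (u, v) obey Gronwall's inequality as soon as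
   u' and v' are bounded below the way the vector field is, so they stay zero once zero.
   Applied to (T_a, T_s), whose field points inwards on the boundary of the positive quadrant
   (the sources are nonnegative), this keeps the solution in that quadrant.  Applied to the
   increments T(t+h) - T(t) and letting h -> 0+, it shows that once T_a' and T_s' have the
   same sign they keep it; if they never do, neither vanishes.  Either way each component is
   eventually monotone.  In the quadrant, W = c ga T_a + gs T_s with 1/2 < c < 1/epsa
   satisfies W' <= D - W, so the trajectory is bounded, hence convergent; and the limit is an
   equilibrium because a bounded function cannot have a derivative with a nonzero limit. *)

From Stdlib Require Import Reals Lra Psatz Classical Ranalysis5.
From Coquelicot Require Import Coquelicot.
Open Scope R_scope.

(** * Calculus on the real line *)

Lemma is_derive_continuity_pt (f : R -> R) x l : is_derive f x l -> continuity_pt f x.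
Proof.
  intros Hf. apply continuity_pt_filterlim, (ex_derive_continuous f x). now exists l.
Qed.

Lemma derive_ge0_le (f df : R -> R) x y : x <= y ->
  (forall t, x <= t <= y -> is_derive f t (df t)) ->
  (forall t, x <= t <= y -> 0 <= df t) -> f x <= f y.
Proof.
  intros Hxy Hd Hpos.
  assert (Hxy' : forall t, Rmin x y <= t <= Rmax x y -> x <= t <= y).
  { rewrite Rmin_left, Rmax_right by lra. auto. }
  destruct (MVT_gen f x y df) as (c & Hc & Heq).
  - intros t Ht. apply Hd, Hxy'. lra.
  - intros t Ht. apply (is_derive_continuity_pt _ _ (df t)), Hd, Hxy', Ht.
  - specialize (Hpos c (Hxy' c Hc)). nra.
Qed.

Lemma exp_le x y : x <= y -> exp x <= exp y.
Proof. intros [Hlt | ->]; [now apply Rlt_le, exp_increasing | apply Rle_refl]. Qed.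

Lemma gronwall (E dE : R -> R) c t0 t1 : t0 <= t1 ->
  (forall t, t0 <= t <= t1 -> is_derive E t (dE t)) ->
  (forall t, t0 <= t <= t1 -> dE t <= c * E t) ->
  E t1 <= E t0 * exp (c * (t1 - t0)).
Proof.
  intros H01 Hd Hle.
  assert (HW : - (E t0 * exp (- c * t0)) <= - (E t1 * exp (- c * t1))).
  { apply (derive_ge0_le (fun t => - (E t * exp (- c * t)))
             (fun t => - (dE t * exp (- c * t) + E t * (- c * exp (- c * t))))).
    - exact H01.
    - intros t Ht. apply (is_derive_opp (fun t => E t * exp (- c * t))).
      apply (is_derive_mult E (fun t => exp (- c * t))).
      + now apply Hd.
      + apply (is_derive_comp exp (fun t => - c * t)); [apply is_derive_exp |].
        evar_last; [apply is_derive_scal, is_derive_id | apply Rmult_1_r].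
      + intros; apply Rmult_comm.
    - intros t Ht. specialize (Hle t Ht). pose proof (exp_pos (- c * t)). nra. }
  replace (E t1) with (E t1 * exp (- c * t1) * exp (c * t1))
    by (rewrite Rmult_assoc, <- exp_plus, <- Rmult_plus_distr_r, Rplus_opp_l,
          Rmult_0_l, exp_0; ring).
  replace (c * (t1 - t0)) with (- c * t0 + c * t1) by ring.
  rewrite exp_plus, <- Rmult_assoc.
  apply Rmult_le_compat_r; [apply Rlt_le, exp_pos | lra].
Qed.

Lemma derive_le_sub_bounded (W dW : R -> R) D t0 :
  (forall t, t0 <= t -> is_derive W t (dW t)) ->
  (forall t, t0 <= t -> dW t <= D - W t) ->
  forall t, t0 <= t -> W t <= Rmax (W t0) D.
Proof.
  intros Hd Hle t Ht.
  assert (HV : W t - D <= (W t0 - D) * exp (-1 * (t - t0))).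
  { apply (gronwall (fun y => W y - D) dW); [exact Ht | |].
    - intros y Hy. evar_last.
      + apply (is_derive_minus W (fun _ => D)); [apply Hd; lra | apply is_derive_const].
      + simpl; unfold minus, plus, opp, zero; simpl; ring.
    - intros y Hy. specialize (Hle y (proj1 Hy)). lra. }
  assert (Hexp : 0 < exp (-1 * (t - t0)) <= 1).
  { split; [apply exp_pos | rewrite <- exp_0; apply exp_le; lra]. }
  pose proof (Rmax_l (W t0) D). pose proof (Rmax_r (W t0) D).
  destruct (Rle_or_lt (W t0) D); nra.
Qed.

Lemma is_derive_shift (f : R -> R) x h l :
  is_derive f (x + h) l -> is_derive (fun y => f (y + h)) x l.
Proof.
  intros Hf. evar_last.
  - apply (is_derive_comp f (fun y => y + h)); [exact Hf |].
    apply (is_derive_plus (fun y => y) (fun _ => h)); [apply is_derive_id | apply is_derive_const].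
  - simpl. unfold scal, plus, zero, one; simpl; unfold mult; simpl. ring.
Qed.

Lemma is_derive_right_quotient (f : R -> R) (x l : R) : is_derive f x l ->
  filterlim (fun h => (f (x + h) - f x) / h) (at_right 0) (locally l).
Proof.
  intros Hf. apply is_derive_Reals in Hf.
  apply filterlim_locally. intros eps.
  destruct (Hf eps (cond_pos eps)) as [d Hd].
  exists d. intros h Hh Hpos. apply Hd; [lra |].
  change (Rabs (h - 0) < d) in Hh. now rewrite Rminus_0_r in Hh.
Qed.

Lemma is_derive_sqr_Rmin0 x : is_derive (fun y => Rmin y 0 ^ 2) x (2 * Rmin x 0).
Proof.
  destruct (Rtotal_order x 0) as [Hx | [-> | Hx]].
  - apply (is_derive_ext_loc (fun y => y ^ 2)).
    + apply (locally_interval _ _ m_infty (Finite 0)); [exact I | exact Hx |].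
      intros y _ Hy. simpl in Hy. now rewrite Rmin_left by lra.
    + rewrite Rmin_left by lra. apply is_derive_Reals.
      replace (2 * x) with (INR 2 * x ^ (2 - 1)) by (simpl; ring).
      apply derivable_pt_lim_pow.
  - apply is_derive_Reals. intros eps Heps. exists (mkposreal eps Heps).
    intros h Hh Hhe. simpl in Hhe. rewrite Rplus_0_l, (Rmin_left 0 0) by lra.
    destruct (Rle_or_lt h 0).
    + rewrite Rmin_left by lra. now replace ((h ^ 2 - 0 ^ 2) / h - 2 * 0) with h by (field; lra).
    + rewrite Rmin_right by lra.
      replace ((0 ^ 2 - 0 ^ 2) / h - 2 * 0) with 0 by (field; lra). now rewrite Rabs_R0.
  - apply (is_derive_ext_loc (fun _ => 0)).
    + apply (locally_interval _ _ (Finite 0) p_infty); [exact Hx | exact I |].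
      intros y Hy _. simpl in Hy. rewrite Rmin_right by lra. simpl. ring.
    + replace (2 * Rmin x 0) with 0 by (rewrite Rmin_right by lra; simpl; ring).
      apply is_derive_Reals, derivable_pt_lim_const.
Qed.

Lemma filterlim_Rmult_r {T : Type} {F : (T -> Prop) -> Prop} {FF : Filter F}
  (f : T -> R) (x c : R) :
  filterlim f F (locally x) -> filterlim (fun t => f t * c) F (locally (x * c)).
Proof.
  intros Hf. apply (filterlim_comp_2 f (fun _ => c) Rmult Hf (filterlim_const c)).
  exact (filterlim_mult x c).
Qed.

Lemma right_lim_continuous_bounded (f : R -> R) (l T : R) : 0 < T ->
  filterlim f (at_right 0) (locally l) -> (forall t, 0 < t -> continuity_pt f t) ->
  exists M, forall t, 0 < t <= T -> Rabs (f t) <= M.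
Proof.
  intros HT Hl Hc.
  destruct (proj1 (filterlim_locally f l) Hl (mkposreal 1 Rlt_0_1)) as [d Hd].
  set (d' := Rmin (d / 2) T).
  assert (Hd' : 0 < d' <= T /\ d' < d)
    by (pose proof (cond_pos d); unfold d', Rmin; destruct Rle_dec; lra).
  destruct (continuity_ab_maj (fun t => Rabs (f t)) d' T ltac:(lra)) as (tmax & Hmax & _).
  { intros c Hc'. apply (continuity_pt_comp f Rabs); [apply Hc; lra | apply Rcontinuity_abs]. }
  exists (Rmax (Rabs l + 1) (Rabs (f tmax))). intros t Ht.
  destruct (Rlt_or_le t d') as [Hsmall | Hlarge].
  - apply (Rle_trans _ (Rabs l + 1)); [| apply Rmax_l].
    assert (Hball : Rabs (f t - l) < 1).
    { apply (Hd t); [| lra]. change (Rabs (t - 0) < d). rewrite Rminus_0_r, Rabs_right; lra. }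
    pose proof (Rabs_triang (f t - l) l). replace (f t - l + l) with (f t) in * by ring. lra.
  - apply (Rle_trans _ (Rabs (f tmax))); [apply Hmax; lra | apply Rmax_r].
Qed.

Definition sign_constant_from (T : R) (f : R -> R) : Prop :=
  (forall t, T <= t -> 0 <= f t) \/ (forall t, T <= t -> f t <= 0).

Lemma continuous_nonzero_sign_constant (f : R -> R) T :
  (forall t, T <= t -> continuity_pt f t) -> (forall t, T <= t -> f t <> 0) ->
  sign_constant_from T f.
Proof.
  assert (Hpos : forall g : R -> R, (forall t, T <= t -> continuity_pt g t) ->
            (forall t, T <= t -> g t <> 0) -> 0 < g T -> forall t, T <= t -> 0 <= g t).
  { intros g Hc Hnz HT t Ht. apply Rnot_lt_le. intros Hneg.
    destruct (IVT_interv (fun y => - g y) T t) as (z & Hz & Hgz).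
    - intros y Hy. apply continuity_pt_opp, Hc. lra.
    - destruct Ht as [Ht | <-]; lra.
    - lra.
    - lra.
    - apply (Hnz z); lra. }
  intros Hc Hnz. destruct (Rlt_or_le 0 (f T)) as [HT | HT]; [left; now apply Hpos |].
  right. intros t Ht.
  enough (0 <= - f t) by lra.
  apply (Hpos (fun y => - f y)); [| | | exact Ht].
  - intros y Hy. now apply continuity_pt_opp, Hc.
  - intros y Hy Hfy. apply (Hnz y Hy). lra.
  - pose proof (Hnz T (Rle_refl T)). lra.
Qed.

Lemma bounded_nondecreasing_cvg (f df : R -> R) T M :
  (forall t, T <= t -> is_derive f t (df t)) -> (forall t, T <= t -> Rabs (f t) <= M) ->
  (forall t, T <= t -> 0 <= df t) ->
  exists A : R, is_lim f p_infty A /\ Rabs A <= M.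
Proof.
  intros Hd Hb Hpos.
  assert (Hmono : forall x y, T <= x -> x <= y -> f x <= f y).
  { intros x y Hx Hxy. apply (derive_ge0_le f df); [exact Hxy | |];
      intros t Ht; [apply Hd | apply Hpos]; lra. }
  set (E := fun v => exists t, T <= t /\ v = f t).
  assert (HM : is_upper_bound E M).
  { intros v (t & Ht & ->). now apply Rabs_le_between, Hb. }
  destruct (completeness E) as (A & HA & HAleast).
  { now exists M. }
  { exists (f T), T. split; [apply Rle_refl | reflexivity]. }
  exists A. split.
  - apply is_lim_spec. intros eps.
    destruct (classic (exists t1, T <= t1 /\ A - eps < f t1)) as [(t1 & Ht1 & Hlt) | Hnone].
    + exists t1. intros x Hx.
      assert (f t1 <= f x) by (apply Hmono; lra).
      assert (f x <= A) by (apply HA; exists x; split; [lra | reflexivity]).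
      apply Rabs_lt_between'. lra.
    + assert (Hub : is_upper_bound E (A - eps)).
      { intros v (t & Ht & ->). apply Rnot_lt_le. intros Hlt. apply Hnone. now exists t. }
      pose proof (HAleast _ Hub). pose proof (cond_pos eps). lra.
  - apply Rabs_le_between. split.
    + assert (f T <= A) by (apply HA; exists T; split; [apply Rle_refl | reflexivity]).
      pose proof (proj1 (Rabs_le_between _ _) (Hb T (Rle_refl T))). lra.
    + now apply HAleast.
Qed.

Lemma bounded_monotone_cvg (f df : R -> R) T M :
  (forall t, T <= t -> is_derive f t (df t)) -> (forall t, T <= t -> Rabs (f t) <= M) ->
  sign_constant_from T df ->
  exists A : R, is_lim f p_infty A /\ Rabs A <= M.
Proof.
  intros Hd Hb [Hpos | Hneg]; [now apply (bounded_nondecreasing_cvg f df T) |].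
  destruct (bounded_nondecreasing_cvg (fun y => - f y) (fun y => - df y) T M) as (A & HA & HAM).
  - intros t Ht. now apply (is_derive_opp f), Hd.
  - intros t Ht. rewrite Rabs_Ropp. now apply Hb.
  - intros t Ht. specialize (Hneg t Ht). lra.
  - exists (- A). split; [| now rewrite Rabs_Ropp].
    apply (is_lim_ext (fun y => - - f y) f p_infty (- A)); [intros; apply Ropp_involutive |].
    exact (is_lim_opp _ p_infty A HA).
Qed.

Lemma bounded_derive_lim_le0 (f df : R -> R) (t0 M c : R) :
  (forall t, t0 <= t -> is_derive f t (df t)) -> (forall t, t0 <= t -> Rabs (f t) <= M) ->
  is_lim df p_infty c -> c <= 0.
Proof.
  intros Hd Hb Hlim. apply Rnot_lt_le. intros Hc.
  assert (Hc2 : 0 < c / 2) by lra.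
  apply is_lim_spec in Hlim. destruct (Hlim (mkposreal _ Hc2)) as [N HN]. simpl in HN.
  assert (HM : 0 <= M) by (pose proof (Hb t0 (Rle_refl t0)); pose proof (Rabs_pos (f t0)); lra).
  set (t1 := Rmax N t0 + 1). set (D := 4 * M / c + 1).
  assert (Ht1 : N < t1 /\ t0 < t1)
    by (pose proof (Rmax_l N t0); pose proof (Rmax_r N t0); unfold t1; lra).
  assert (HD : c / 2 * D = 2 * M + c / 2) by (unfold D; field; lra).
  assert (HD0 : 0 < D)
    by (assert (0 <= M / c) by (apply Rdiv_le_0_compat; lra); unfold D, Rdiv in *; lra).
  assert (Hgrowth : f t1 - c / 2 * t1 <= f (t1 + D) - c / 2 * (t1 + D)).
  { apply (derive_ge0_le (fun y => f y - c / 2 * y) (fun y => df y - c / 2)); [lra | |].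
    - intros t Ht. evar_last.
      + apply (is_derive_minus f (fun y => c / 2 * y)); [apply Hd; lra |].
        apply (is_derive_scal (fun y => y)), is_derive_id.
      + simpl; unfold minus, plus, opp, one; simpl; ring.
    - intros t Ht. specialize (HN t ltac:(lra)). apply Rabs_lt_between' in HN. lra. }
  pose proof (proj1 (Rabs_le_between _ _) (Hb t1 ltac:(lra))).
  pose proof (proj1 (Rabs_le_between _ _) (Hb (t1 + D) ltac:(lra))).
  lra.
Qed.

Lemma bounded_derive_lim_0 (f df : R -> R) (t0 M c : R) :
  (forall t, t0 <= t -> is_derive f t (df t)) -> (forall t, t0 <= t -> Rabs (f t) <= M) ->
  is_lim df p_infty c -> c = 0.
Proof.
  intros Hd Hb Hlim.
  pose proof (bounded_derive_lim_le0 f df t0 M c Hd Hb Hlim).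
  enough (- c <= 0) by lra.
  apply (bounded_derive_lim_le0 (fun y => - f y) (fun y => - df y) t0 M).
  - intros t Ht. now apply (is_derive_opp f), Hd.
  - intros t Ht. rewrite Rabs_Ropp. now apply Hb.
  - exact (is_lim_opp df p_infty c Hlim).
Qed.

(** * Cooperative planar systems *)

Definition neg_energy (x y : R) : R := Rmin x 0 ^ 2 + Rmin y 0 ^ 2.

Lemma neg_energy_ge0 x y : 0 <= neg_energy x y.
Proof.
  unfold neg_energy. pose proof (pow2_ge_0 (Rmin x 0)). pose proof (pow2_ge_0 (Rmin y 0)). lra.
Qed.

Lemma neg_energy_eq0 x y : 0 <= x -> 0 <= y -> neg_energy x y = 0.
Proof. intros Hx Hy. unfold neg_energy. rewrite !Rmin_right by lra. ring. Qed.

Lemma neg_energy_le0 x y : neg_energy x y <= 0 -> 0 <= x /\ 0 <= y.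
Proof.
  unfold neg_energy. intros H.
  pose proof (pow2_ge_0 (Rmin x 0)). pose proof (pow2_ge_0 (Rmin y 0)).
  split; apply Rnot_lt_le; intros Hneg; [rewrite (Rmin_left x) in H | rewrite (Rmin_left y) in H];
    nra.
Qed.

Lemma neg_energy_div x y h : 0 < h -> neg_energy (x / h) (y / h) = neg_energy x y / h ^ 2.
Proof.
  intros Hh.
  assert (Hmin : forall z, Rmin (z / h) 0 = Rmin z 0 / h).
  { intros z. pose proof (Rinv_0_lt_compat h Hh). unfold Rdiv. destruct (Rle_or_lt z 0).
    - rewrite !Rmin_left; nra.
    - rewrite !Rmin_right; nra. }
  unfold neg_energy. rewrite !Hmin. field. lra.
Qed.

Lemma filterlim_neg_energy {T : Type} {F : (T -> Prop) -> Prop} {FF : Filter F}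
  (u v : T -> R) (x y : R) :
  filterlim u F (locally x) -> filterlim v F (locally y) ->
  filterlim (fun t => neg_energy (u t) (v t)) F (locally (neg_energy x y)).
Proof.
  intros Hu Hv.
  assert (Hcont : forall (w : T -> R) z, filterlim w F (locally z) ->
            filterlim (fun t => Rmin (w t) 0 ^ 2) F (locally (Rmin z 0 ^ 2))).
  { intros w z Hw. apply (filterlim_comp _ _ _ w (fun y => Rmin y 0 ^ 2) F (locally z) _ Hw).
    apply (ex_derive_continuous (fun y => Rmin y 0 ^ 2)).
    eexists. apply is_derive_sqr_Rmin0. }
  apply (filterlim_comp_2 _ _ Rplus (Hcont u x Hu) (Hcont v y Hv)).
  exact (filterlim_plus (Rmin x 0 ^ 2) (Rmin y 0 ^ 2)).
Qed.

Definition lipschitz2_on (M K : R) (F : R -> R -> R) : Prop :=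
  forall x1 x2 y1 y2, Rabs x1 <= M -> Rabs x2 <= M -> Rabs y1 <= M -> Rabs y2 <= M ->
  Rabs (F x2 y2 - F x1 y1) <= K * (Rabs (x2 - x1) + Rabs (y2 - y1)).

Lemma filterlim_lipschitz2 {T : Type} {Fl : (T -> Prop) -> Prop} {FF : Filter Fl}
  (F : R -> R -> R) (M K : R) (a s : T -> R) (A S : R) :
  0 <= K -> lipschitz2_on M K F -> Rabs A <= M -> Rabs S <= M ->
  Fl (fun t => Rabs (a t) <= M /\ Rabs (s t) <= M) ->
  filterlim a Fl (locally A) -> filterlim s Fl (locally S) ->
  filterlim (fun t => F (a t) (s t)) Fl (locally (F A S)).
Proof.
  intros HK HF HA HS Hb Ha Hs. apply filterlim_locally. intros eps.
  assert (Hd : 0 < eps / (2 * K + 2)) by (apply Rdiv_lt_0_compat; [apply cond_pos | lra]).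
  pose proof (proj1 (filterlim_locally a A) Ha (mkposreal _ Hd)) as Ha'.
  pose proof (proj1 (filterlim_locally s S) Hs (mkposreal _ Hd)) as Hs'.
  refine (filter_imp _ _ _ (filter_and _ _ Hb (filter_and _ _ Ha' Hs'))).
  intros t ([Hat Hst] & HaA & HsS).
  change (Rabs (a t - A) < eps / (2 * K + 2)) in HaA.
  change (Rabs (s t - S) < eps / (2 * K + 2)) in HsS.
  change (Rabs (F (a t) (s t) - F A S) < eps).
  assert (Heps : eps / (2 * K + 2) * (2 * K + 2) = eps) by (field; lra).
  apply (Rle_lt_trans _ _ _ (HF A (a t) S (s t) HA Hat HS Hst)).
  pose proof (Rabs_pos (a t - A)). pose proof (Rabs_pos (s t - S)). nra.
Qed.

(* On the box [-M, M]^2, F is K-Lipschitz in its first argument, and nondecreasing and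
   K-Lipschitz in its second: the quasi-monotonicity of a cooperative system. *)
Definition cooperative_in (M K : R) (F : R -> R -> R) : Prop :=
  forall x1 x2 y1 y2, Rabs x1 <= M -> Rabs x2 <= M -> Rabs y1 <= M -> Rabs y2 <= M ->
  - K * Rabs (x2 - x1) + K * Rmin (y2 - y1) 0 <= F x2 y2 - F x1 y1.

Lemma Rmin0_ge_opp_abs x : - Rabs x <= Rmin x 0.
Proof.
  destruct (Rle_or_lt x 0).
  - rewrite Rmin_left, Rabs_left1; lra.
  - rewrite Rmin_right, Rabs_right; lra.
Qed.

Lemma cooperative_in_lipschitz2 M K F : 0 <= K -> cooperative_in M K F -> lipschitz2_on M K F.
Proof.
  intros HK HF x1 x2 y1 y2 H1 H2 H3 H4.
  pose proof (HF x1 x2 y1 y2 H1 H2 H3 H4). pose proof (HF x2 x1 y2 y1 H2 H1 H4 H3).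
  pose proof (Rmin0_ge_opp_abs (y2 - y1)). pose proof (Rmin0_ge_opp_abs (y1 - y2)).
  rewrite (Rabs_minus_sym x1 x2), (Rabs_minus_sym y1 y2) in *.
  apply Rabs_le_between. split; nra.
Qed.

Lemma cooperative_in_opp M K F :
  cooperative_in M K F -> cooperative_in M K (fun x y => - F (- x) (- y)).
Proof.
  intros HF x1 x2 y1 y2 H1 H2 H3 H4.
  rewrite <- Rabs_Ropp in H1, H2, H3, H4.
  pose proof (HF (- x2) (- x1) (- y2) (- y1) H2 H1 H4 H3) as H.
  replace (- x1 - - x2) with (x2 - x1) in H by ring.
  replace (- y1 - - y2) with (y2 - y1) in H by ring.
  lra.
Qed.

Lemma cooperative_in_div M K K' F g : cooperative_in M K F -> 0 < g -> K / g <= K' ->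
  cooperative_in M K' (fun x y => F x y / g).
Proof.
  intros HF Hg HK x1 x2 y1 y2 H1 H2 H3 H4.
  pose proof (HF x1 x2 y1 y2 H1 H2 H3 H4) as H.
  pose proof (Rmin0_ge_opp_abs (y2 - y1)). pose proof (Rmin_r (y2 - y1) 0).
  pose proof (Rabs_pos (x2 - x1)).
  replace (F x2 y2 / g - F x1 y1 / g) with ((F x2 y2 - F x1 y1) / g) by (field; lra).
  apply (Rle_trans _ (K / g * (- Rabs (x2 - x1) + Rmin (y2 - y1) 0))); [nra |].
  replace (K / g * (- Rabs (x2 - x1) + Rmin (y2 - y1) 0))
    with ((- K * Rabs (x2 - x1) + K * Rmin (y2 - y1) 0) / g) by (field; lra).
  apply Rmult_le_compat_r; [apply Rlt_le, Rinv_0_lt_compat |]; lra.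
Qed.

Lemma cooperative_in_neg_part M K F x y : cooperative_in M K F ->
  Rabs x <= M -> Rabs y <= M -> 0 <= F 0 (Rmax y 0) ->
  - K * Rabs x + K * Rmin y 0 <= F x y.
Proof.
  intros HF Hx Hy H0.
  assert (H0M : Rabs 0 <= M) by (rewrite Rabs_R0; pose proof (Rabs_pos x); lra).
  assert (HyM : Rabs (Rmax y 0) <= M).
  { destruct (Rle_or_lt y 0); [rewrite Rmax_right by lra | rewrite Rmax_left by lra]; assumption. }
  pose proof (HF 0 x (Rmax y 0) y H0M Hx HyM Hy) as H.
  rewrite Rminus_0_r in H.
  replace (y - Rmax y 0) with (Rmin y 0) in H
    by (destruct (Rle_or_lt y 0);
          [rewrite Rmax_right, Rmin_left | rewrite Rmax_left, Rmin_right]; lra).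
  rewrite Rmin_left in H by apply Rmin_r.
  lra.
Qed.

Lemma Rmin0_mul_le K U dU n : 0 <= K -> n <= 0 -> - K * Rabs U + K * n <= dU ->
  Rmin U 0 * dU <= K * Rmin U 0 ^ 2 + K * Rmin U 0 * n.
Proof.
  intros HK Hn H. destruct (Rle_or_lt U 0).
  - rewrite Rmin_left by lra. rewrite Rabs_left1 in H by lra. nra.
  - rewrite Rmin_right by lra. lra.
Qed.

Lemma neg_energy_gronwall (u v du dv : R -> R) K t0 t1 : 0 <= K -> t0 <= t1 ->
  (forall t, t0 <= t <= t1 -> is_derive u t (du t) /\ is_derive v t (dv t)) ->
  (forall t, t0 <= t <= t1 -> - K * Rabs (u t) + K * Rmin (v t) 0 <= du t /\
                               - K * Rabs (v t) + K * Rmin (u t) 0 <= dv t) ->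
  neg_energy (u t1) (v t1) <= neg_energy (u t0) (v t0) * exp (4 * K * (t1 - t0)).
Proof.
  intros HK H01 Hd Hineq.
  apply (gronwall (fun t => neg_energy (u t) (v t))
                  (fun t => 2 * Rmin (u t) 0 * du t + 2 * Rmin (v t) 0 * dv t)); [exact H01 | |].
  - intros t Ht. destruct (Hd t Ht) as [Hu Hv]. unfold neg_energy.
    apply (is_derive_plus (fun t => Rmin (u t) 0 ^ 2) (fun t => Rmin (v t) 0 ^ 2));
      evar_last;
      [ apply (is_derive_comp (fun y => Rmin y 0 ^ 2) u t _ _ (is_derive_sqr_Rmin0 _) Hu) |
      | apply (is_derive_comp (fun y => Rmin y 0 ^ 2) v t _ _ (is_derive_sqr_Rmin0 _) Hv) | ];
      simpl; unfold scal; simpl; unfold mult; simpl; ring.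
  - intros t Ht. destruct (Hineq t Ht) as [Hu Hv]. unfold neg_energy.
    pose proof (Rmin0_mul_le K (u t) (du t) _ HK (Rmin_r (v t) 0) Hu).
    pose proof (Rmin0_mul_le K (v t) (dv t) _ HK (Rmin_r (u t) 0) Hv).
    (* With m = min(u,0), n = min(v,0): 2 m u' + 2 n v' <= 2K (m + n)^2 <= 4K (m^2 + n^2). *)
    pose proof (pow2_ge_0 (Rmin (u t) 0 - Rmin (v t) 0)).
    nra.
Qed.

Lemma cooperative_nonneg (F G : R -> R -> R) (u v : R -> R) (K M u0 v0 t : R) :
  0 <= K -> 0 < t -> cooperative_in M K F -> cooperative_in M K (fun y x => G x y) ->
  (forall y, 0 <= y -> 0 <= F 0 y) -> (forall x, 0 <= x -> 0 <= G x 0) ->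
  (forall y, 0 < y <= t -> is_derive u y (F (u y) (v y)) /\ is_derive v y (G (u y) (v y))) ->
  (forall y, 0 < y <= t -> Rabs (u y) <= M /\ Rabs (v y) <= M) ->
  filterlim u (at_right 0) (locally u0) -> filterlim v (at_right 0) (locally v0) ->
  0 <= u0 -> 0 <= v0 -> 0 <= u t /\ 0 <= v t.
Proof.
  intros HK Ht HF HG HF0 HG0 Hd Hb Hu Hv Hu0 Hv0. apply neg_energy_le0.
  set (X := exp (4 * K * t)).
  assert (Hgr : forall d, 0 < d <= t -> neg_energy (u t) (v t) <= neg_energy (u d) (v d) * X).
  { intros d Hdt.
    apply (Rle_trans _ (neg_energy (u d) (v d) * exp (4 * K * (t - d)))).
    - apply (neg_energy_gronwall u v (fun y => F (u y) (v y)) (fun y => G (u y) (v y)) K d t HK);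
        [lra | intros y Hy; apply Hd; lra |].
      intros y Hy. destruct (Hb y ltac:(lra)) as [Huy Hvy].
      split; [apply (cooperative_in_neg_part M K F) |
              apply (cooperative_in_neg_part M K (fun y x => G x y))];
        auto using Rmax_r.
    - apply Rmult_le_compat_l; [apply neg_energy_ge0 | apply exp_le; nra]. }
  assert (Hlim : Rbar_le (neg_energy (u t) (v t)) (neg_energy u0 v0 * X)).
  { refine (filterlim_le (F := at_right 0) (fun _ => neg_energy (u t) (v t))
              (fun d => neg_energy (u d) (v d) * X) (Finite _) (Finite _) _
              (filterlim_const _) (filterlim_Rmult_r _ _ X (filterlim_neg_energy u v u0 v0 Hu Hv))).
    exists (mkposreal t Ht). intros d Hdt Hpos. apply Hgr. split; [exact Hpos |].
    change (Rabs (d - 0) < t) in Hdt. rewrite Rminus_0_r, Rabs_right in Hdt; lra. }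
  rewrite (neg_energy_eq0 u0 v0 Hu0 Hv0), Rmult_0_l in Hlim. exact Hlim.
Qed.

Record cooperative_solution (t0 K M : R) (F G : R -> R -> R) (a s : R -> R) : Prop := {
  coop_K_ge0 : 0 <= K;
  coop_F : cooperative_in M K F;
  coop_G : cooperative_in M K (fun y x => G x y);
  coop_derive : forall t, t0 <= t ->
    is_derive a t (F (a t) (s t)) /\ is_derive s t (G (a t) (s t));
  coop_bounded : forall t, t0 <= t -> Rabs (a t) <= M /\ Rabs (s t) <= M }.

Section CooperativeSolution.

Variables (t0 K M : R) (F G : R -> R -> R) (a s : R -> R).
Hypothesis Hsol : cooperative_solution t0 K M F G a s.

Lemma cooperative_increment_gronwall h t1 t : 0 < h -> t0 <= t1 <= t ->
  neg_energy (a (t + h) - a t) (s (t + h) - s t) <=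
  neg_energy (a (t1 + h) - a t1) (s (t1 + h) - s t1) * exp (4 * K * (t - t1)).
Proof.
  intros Hh Ht.
  destruct Hsol as [HK HF HG Hd Hb].
  apply (neg_energy_gronwall (fun y => a (y + h) - a y) (fun y => s (y + h) - s y)
           (fun y => F (a (y + h)) (s (y + h)) - F (a y) (s y))
           (fun y => G (a (y + h)) (s (y + h)) - G (a y) (s y))); [exact HK | lra | |].
  - intros y Hy. destruct (Hd y ltac:(lra)) as [Ha Hs].
    destruct (Hd (y + h) ltac:(lra)) as [Hah Hsh].
    split; [apply (is_derive_minus (fun y => a (y + h)) a) |
            apply (is_derive_minus (fun y => s (y + h)) s)];
      auto using is_derive_shift.
  - intros y Hy. destruct (Hb y ltac:(lra)) as [Ha Hs].
    destruct (Hb (y + h) ltac:(lra)) as [Hah Hsh].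
    split; [apply HF | apply (HG (s y) (s (y + h)) (a y) (a (y + h)))]; assumption.
Qed.

Lemma cooperative_derive_gronwall t1 t : t0 <= t1 <= t ->
  neg_energy (F (a t) (s t)) (G (a t) (s t)) <=
  neg_energy (F (a t1) (s t1)) (G (a t1) (s t1)) * exp (4 * K * (t - t1)).
Proof.
  (* neg_energy is 2-homogeneous, so the increment bound holds for the difference quotients;
     let h -> 0+. *)
  intros Ht. set (X := exp (4 * K * (t - t1))).
  set (quot := fun (f : R -> R) x h => (f (x + h) - f x) / h).
  assert (Hquot : forall x, t0 <= x ->
    filterlim (fun h => neg_energy (quot a x h) (quot s x h)) (at_right 0)
              (locally (neg_energy (F (a x) (s x)) (G (a x) (s x))))).
  { intros x Hx. destruct (coop_derive _ _ _ _ _ _ _ Hsol x Hx).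
    apply filterlim_neg_energy; now apply is_derive_right_quotient. }
  refine (filterlim_le (F := at_right 0) _ _
            (Finite (neg_energy (F (a t) (s t)) (G (a t) (s t))))
            (Finite (neg_energy (F (a t1) (s t1)) (G (a t1) (s t1)) * X))
            _ (Hquot t ltac:(lra)) (filterlim_Rmult_r _ _ X (Hquot t1 (proj1 Ht)))).
  exists (mkposreal 1 Rlt_0_1). intros h _ Hh. unfold quot.
  rewrite !neg_energy_div by exact Hh.
  pose proof (cooperative_increment_gronwall h t1 t Hh Ht). fold X in H.
  replace (neg_energy (a (t1 + h) - a t1) (s (t1 + h) - s t1) / h ^ 2 * X)
    with (neg_energy (a (t1 + h) - a t1) (s (t1 + h) - s t1) * X / h ^ 2) by (field; lra).
  apply Rmult_le_compat_r; [apply Rlt_le, Rinv_0_lt_compat; nra | exact H].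
Qed.

Lemma cooperative_derives_ge0_preserved t1 t : t0 <= t1 <= t ->
  0 <= F (a t1) (s t1) -> 0 <= G (a t1) (s t1) ->
  0 <= F (a t) (s t) /\ 0 <= G (a t) (s t).
Proof.
  intros Ht HF HG. apply neg_energy_le0.
  rewrite <- (Rmult_0_l (exp (4 * K * (t - t1)))), <- (neg_energy_eq0 _ _ HF HG).
  exact (cooperative_derive_gronwall t1 t Ht).
Qed.

End CooperativeSolution.

Lemma cooperative_solution_opp t0 K M F G a s :
  cooperative_solution t0 K M F G a s ->
  cooperative_solution t0 K M (fun x y => - F (- x) (- y)) (fun x y => - G (- x) (- y))
    (fun t => - a t) (fun t => - s t).
Proof.
  intros [HK HF HG Hd Hb]. split.
  - exact HK.
  - exact (cooperative_in_opp _ _ _ HF).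
  - exact (cooperative_in_opp _ _ _ HG).
  - intros t Ht. rewrite !Ropp_involutive. destruct (Hd t Ht) as [Ha Hs].
    split; [apply (is_derive_opp a) | apply (is_derive_opp s)]; assumption.
  - intros t Ht. rewrite !Rabs_Ropp. exact (Hb t Ht).
Qed.

Lemma cooperative_derives_le0_preserved t0 K M F G a s t1 t :
  cooperative_solution t0 K M F G a s -> t0 <= t1 <= t ->
  F (a t1) (s t1) <= 0 -> G (a t1) (s t1) <= 0 ->
  F (a t) (s t) <= 0 /\ G (a t) (s t) <= 0.
Proof.
  intros Hsol Ht HF HG.
  pose proof (cooperative_derives_ge0_preserved _ _ _ _ _ _ _
                (cooperative_solution_opp _ _ _ _ _ _ _ Hsol) t1 t Ht) as H.
  cbv beta in H. rewrite !Ropp_involutive in H.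
  destruct H as [Hf Hg]; lra.
Qed.

Section CooperativeConvergence.

Variables (t0 K M : R) (F G : R -> R -> R) (a s : R -> R).
Hypothesis Hsol : cooperative_solution t0 K M F G a s.

Lemma cooperative_rhs_continuity t : t0 < t ->
  continuity_pt (fun y => F (a y) (s y)) t /\ continuity_pt (fun y => G (a y) (s y)) t.
Proof.
  intros Ht. destruct Hsol as [HK HF HG Hd Hb].
  assert (Hnear : locally t (fun y => Rabs (a y) <= M /\ Rabs (s y) <= M)).
  { apply (locally_interval _ t (Finite t0) p_infty Ht I).
    intros y Hy _. apply Hb. simpl in Hy. lra. }
  destruct (Hb t (Rlt_le _ _ Ht)) as [Hat Hst].
  destruct (Hd t (Rlt_le _ _ Ht)) as [Hda Hds].
  assert (Hca : filterlim a (locally t) (locally (a t)))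
    by (apply (ex_derive_continuous a); eexists; exact Hda).
  assert (Hcs : filterlim s (locally t) (locally (s t)))
    by (apply (ex_derive_continuous s); eexists; exact Hds).
  split; apply continuity_pt_filterlim.
  - exact (filterlim_lipschitz2 F M K a s _ _ HK (cooperative_in_lipschitz2 _ _ _ HK HF)
             Hat Hst Hnear Hca Hcs).
  - refine (filterlim_lipschitz2 (fun y x => G x y) M K s a _ _ HK
              (cooperative_in_lipschitz2 _ _ _ HK HG) Hst Hat _ Hcs Hca).
    refine (filter_imp _ _ _ Hnear). tauto.
Qed.

Lemma cooperative_eventually_monotone : exists T, t0 <= T /\
  sign_constant_from T (fun t => F (a t) (s t)) /\ sign_constant_from T (fun t => G (a t) (s t)).
Proof.
  destruct (classic (exists t1, t0 <= t1 /\ 0 <= F (a t1) (s t1) /\ 0 <= G (a t1) (s t1)))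
    as [(t1 & Ht1 & HF & HG) | Hnonneg].
  { exists t1. split; [exact Ht1 |].
    split; left; intros t Ht; apply (cooperative_derives_ge0_preserved _ _ _ _ _ _ _ Hsol t1 t);
      auto; lra. }
  destruct (classic (exists t1, t0 <= t1 /\ F (a t1) (s t1) <= 0 /\ G (a t1) (s t1) <= 0))
    as [(t1 & Ht1 & HF & HG) | Hnonpos].
  { exists t1. split; [exact Ht1 |].
    split; right; intros t Ht; apply (cooperative_derives_le0_preserved _ _ _ _ _ _ _ t1 t Hsol);
      auto; lra. }
  (* Otherwise the two derivatives never share a sign, so neither ever vanishes. *)
  assert (Hnz : forall t, t0 <= t -> F (a t) (s t) <> 0 /\ G (a t) (s t) <> 0).
  { intros t Ht. split; intros H0;
      destruct (Rle_or_lt 0 (F (a t) (s t))), (Rle_or_lt 0 (G (a t) (s t)));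
      (apply Hnonneg + apply Hnonpos); exists t; repeat split; auto; lra. }
  exists (t0 + 1). split; [lra |].
  split; apply continuous_nonzero_sign_constant; intros t Ht;
    first [apply (cooperative_rhs_continuity t) | apply (Hnz t)]; lra.
Qed.

Lemma cooperative_solution_cvg : exists A S : R,
  F A S = 0 /\ G A S = 0 /\ is_lim a p_infty A /\ is_lim s p_infty S.
Proof.
  destruct cooperative_eventually_monotone as (T & HT & HsF & HsG).
  destruct Hsol as [HK HF HG Hd Hb].
  assert (Hda : forall t, T <= t -> is_derive a t (F (a t) (s t)))
    by (intros t Ht; exact (proj1 (Hd t ltac:(lra)))).
  assert (Hds : forall t, T <= t -> is_derive s t (G (a t) (s t)))
    by (intros t Ht; exact (proj2 (Hd t ltac:(lra)))).
  assert (Hba : forall t, T <= t -> Rabs (a t) <= M)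
    by (intros t Ht; exact (proj1 (Hb t ltac:(lra)))).
  assert (Hbs : forall t, T <= t -> Rabs (s t) <= M)
    by (intros t Ht; exact (proj2 (Hb t ltac:(lra)))).
  destruct (bounded_monotone_cvg a _ T M Hda Hba HsF) as (A & HA & HAM).
  destruct (bounded_monotone_cvg s _ T M Hds Hbs HsG) as (S & HS & HSM).
  assert (Hnear : Rbar_locally p_infty (fun t => Rabs (a t) <= M /\ Rabs (s t) <= M))
    by (exists T; intros t Ht; apply Hb; lra).
  exists A, S. split; [| split; [| split; assumption]].
  - apply (bounded_derive_lim_0 a _ T M _ Hda Hba).
    exact (filterlim_lipschitz2 F M K a s A S HK (cooperative_in_lipschitz2 _ _ _ HK HF)
             HAM HSM Hnear HA HS).
  - apply (bounded_derive_lim_0 s _ T M _ Hds Hbs).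
    refine (filterlim_lipschitz2 (fun y x => G x y) M K s a S A HK
              (cooperative_in_lipschitz2 _ _ _ HK HG) HSM HAM _ HS HA).
    refine (filter_imp _ _ _ Hnear). tauto.
Qed.

End CooperativeConvergence.

(** * The two-temperature system *)

Definition signed_pow4 (x : R) : R := Rabs x ^ 3 * x.

Lemma signed_pow4_le x y : x <= y -> signed_pow4 x <= signed_pow4 y.
Proof.
  unfold signed_pow4. intros H.
  destruct (Rle_or_lt 0 x), (Rle_or_lt 0 y).
  - rewrite !Rabs_right by lra. assert (x * x <= y * y) by nra. nra.
  - lra.
  - rewrite (Rabs_left x), (Rabs_right y) by lra. nra.
  - rewrite !Rabs_left by lra. assert (y * y <= x * x) by nra. nra.
Qed.

Lemma signed_pow4_lipschitz M x y : Rabs x <= M -> Rabs y <= M ->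
  Rabs (signed_pow4 x - signed_pow4 y) <= 4 * M ^ 3 * Rabs (x - y).
Proof.
  unfold signed_pow4. intros Hx Hy.
  apply Rabs_le_between in Hx. apply Rabs_le_between in Hy.
  assert (Hxx : x * x <= M * M) by nra. assert (Hyy : y * y <= M * M) by nra.
  destruct (Rle_or_lt 0 x), (Rle_or_lt 0 y);
    [rewrite (Rabs_right x), (Rabs_right y) by lra | rewrite (Rabs_right x), (Rabs_left y) by lra
    |rewrite (Rabs_left x), (Rabs_right y) by lra | rewrite (Rabs_left x), (Rabs_left y) by lra].
  - replace (x ^ 3 * x - y ^ 3 * y) with ((x - y) * ((x + y) * (x * x + y * y))) by ring.
    rewrite Rabs_mult, Rmult_comm, (Rabs_right (_ * _)) by nra.
    apply Rmult_le_compat_r; [apply Rabs_pos | nra].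
  - rewrite (Rabs_right (x - y)) by lra.
    replace (x ^ 3 * x - (- y) ^ 3 * y) with (x ^ 4 + y ^ 4) by ring.
    assert (x * x * x <= M ^ 3) by nra. assert (- y * (- y) * (- y) <= M ^ 3) by nra.
    rewrite Rabs_right by nra. nra.
  - rewrite (Rabs_left (x - y)) by lra.
    replace ((- x) ^ 3 * x - y ^ 3 * y) with (- (x ^ 4 + y ^ 4)) by ring.
    assert (y * y * y <= M ^ 3) by nra. assert (- x * (- x) * (- x) <= M ^ 3) by nra.
    rewrite Rabs_Ropp, Rabs_right by nra. nra.
  - replace ((- x) ^ 3 * x - (- y) ^ 3 * y) with ((x - y) * (- (x + y) * (x * x + y * y))) by ring.
    rewrite Rabs_mult, Rmult_comm, (Rabs_right (_ * _)) by nra.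
    apply Rmult_le_compat_r; [apply Rabs_pos | nra].
Qed.

Lemma cooperative_in_balance (lam c1 c2 q L M : R) (b : R -> R) :
  0 <= lam -> 0 <= c1 -> 0 <= c2 -> 0 <= q -> 0 <= L ->
  (forall x y, Rabs (b x - b y) <= L * Rabs (x - y)) ->
  cooperative_in M (lam + 4 * (c1 + c2) * M ^ 3 + q * L)
    (fun x y => - lam * (x - y) - c1 * signed_pow4 x + c2 * signed_pow4 y + q * b x).
Proof.
  intros Hlam Hc1 Hc2 Hq HL Hb x1 x2 y1 y2 H1 H2 H3 H4. cbv beta.
  assert (HM3 : 0 <= M ^ 3) by (apply pow_le; pose proof (Rabs_pos x1); lra).
  pose proof (Rabs_pos (x2 - x1)) as Hdx.
  pose proof (proj1 (Rabs_le_between _ _) (signed_pow4_lipschitz M x2 x1 H2 H1)) as Hpx.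
  pose proof (proj1 (Rabs_le_between _ _) (Hb x2 x1)) as Hbx.
  pose proof (Rle_abs (x2 - x1)). pose proof (Rle_abs (- (x2 - x1))). rewrite Rabs_Ropp in *.
  assert (Hy : (lam + 4 * c2 * M ^ 3) * Rmin (y2 - y1) 0
               <= lam * (y2 - y1) + c2 * (signed_pow4 y2 - signed_pow4 y1)).
  { destruct (Rle_or_lt 0 (y2 - y1)).
    - rewrite Rmin_right by lra. pose proof (signed_pow4_le y1 y2 ltac:(lra)). nra.
    - rewrite Rmin_left by lra.
      pose proof (proj1 (Rabs_le_between _ _) (signed_pow4_lipschitz M y2 y1 H4 H3)).
      rewrite Rabs_left in * by lra. nra. }
  assert (Hlx : lam * (x2 - x1) <= lam * Rabs (x2 - x1)) by (apply Rmult_le_compat_l; lra).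
  assert (Hpx' : c1 * (signed_pow4 x2 - signed_pow4 x1) <= c1 * (4 * M ^ 3 * Rabs (x2 - x1)))
    by (apply Rmult_le_compat_l; lra).
  assert (Hbx' : q * (- L * Rabs (x2 - x1)) <= q * (b x2 - b x1))
    by (apply Rmult_le_compat_l; lra).
  assert (Hm : (4 * c1 * M ^ 3 + q * L) * Rmin (y2 - y1) 0 <= 0).
  { pose proof (Rmult_le_pos _ _ Hc1 HM3). pose proof (Rmult_le_pos _ _ Hq HL).
    pose proof (Rmin_r (y2 - y1) 0). nra. }
  pose proof (Rmult_le_pos _ _ (Rmult_le_pos _ _ Hc2 HM3) Hdx).
  lra.
Qed.

Lemma quartic_dominates_linear (B k x : R) : 0 < k ->
  B * x - k * (x ^ 3 * x) <= k + B ^ 2 / (8 * k).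
Proof.
  intros Hk.
  assert (Hquart : 2 * x ^ 2 - 1 <= x ^ 3 * x) by (pose proof (pow2_ge_0 (x ^ 2 - 1)); nra).
  assert (Hsq : 0 <= 2 * k * (x - B / (4 * k)) ^ 2)
    by (apply Rmult_le_pos; [lra | apply pow2_ge_0]).
  replace (2 * k * (x - B / (4 * k)) ^ 2) with (2 * k * x ^ 2 - B * x + B ^ 2 / (8 * k))
    in Hsq by (field; lra).
  nra.
Qed.

Section Model.

Variables (ga gs lam q sigB epsa La Ls : R) (beta_a beta_s : R -> R).
Hypotheses (Hga : 0 < ga) (Hgs : 0 < gs) (Hlam : 0 <= lam) (Hq : 0 <= q) (HsigB : 0 < sigB)
  (Hepsa : 0 < epsa < 2) (HLa : 0 <= La) (HLs : 0 <= Ls)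
  (Hlip_a : forall x y, Rabs (beta_a x - beta_a y) <= La * Rabs (x - y))
  (Hlip_s : forall x y, Rabs (beta_s x - beta_s y) <= Ls * Rabs (x - y))
  (Hbeta_a : forall x, 0 <= beta_a x) (Hbeta_s : forall x, 0 <= beta_s x).

Definition field_a (x y : R) : R := rhs_a lam q sigB epsa beta_a x y / ga.
Definition field_s (x y : R) : R := rhs_s lam q sigB epsa beta_s x y / gs.

Lemma fields_cooperative M : 0 <= M -> exists K, 0 <= K /\
  cooperative_in M K field_a /\ cooperative_in M K (fun y x => field_s x y).
Proof.
  intros HM.
  set (Ka := lam + 4 * (2 * epsa * sigB + epsa * sigB) * M ^ 3 + q * La).
  set (Ks := lam + 4 * (sigB + epsa * sigB) * M ^ 3 + q * Ls).
  assert (HM3 : 0 <= M ^ 3) by (apply pow_le; lra).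
  assert (HKa : 0 <= Ka / ga).
  { apply Rdiv_le_0_compat; [| lra]. unfold Ka.
    pose proof (Rmult_le_pos _ _ Hq HLa). assert (0 <= epsa * sigB) by nra. nra. }
  assert (HKs : 0 <= Ks / gs).
  { apply Rdiv_le_0_compat; [| lra]. unfold Ks.
    pose proof (Rmult_le_pos _ _ Hq HLs). assert (0 <= epsa * sigB) by nra. nra. }
  exists (Ka / ga + Ks / gs). split; [lra | split].
  - apply (cooperative_in_div M Ka); [| lra | lra].
    intros x1 x2 y1 y2 H1 H2 H3 H4.
    pose proof (cooperative_in_balance lam (2 * epsa * sigB) (epsa * sigB) q La M beta_a
                  Hlam ltac:(nra) ltac:(nra) Hq HLa Hlip_a x1 x2 y1 y2 H1 H2 H3 H4) as H.
    unfold Ka, rhs_a, signed_pow4 in *. cbv beta in H. lra.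
  - apply (cooperative_in_div M Ks _ (fun y x => rhs_s lam q sigB epsa beta_s x y)); [| lra | lra].
    intros x1 x2 y1 y2 H1 H2 H3 H4.
    pose proof (cooperative_in_balance lam sigB (epsa * sigB) q Ls M beta_s
                  Hlam ltac:(lra) ltac:(nra) Hq HLs Hlip_s x1 x2 y1 y2 H1 H2 H3 H4) as H.
    unfold Ks, rhs_s, signed_pow4 in *. cbv beta in H. lra.
Qed.

Lemma field_a_0_ge0 y : 0 <= y -> 0 <= field_a 0 y.
Proof.
  intros Hy. unfold field_a, rhs_a. apply Rdiv_le_0_compat; [| exact Hga].
  rewrite Rabs_R0, Rabs_right by lra.
  pose proof (Rmult_le_pos _ _ Hq (Hbeta_a 0)).
  assert (0 <= y ^ 3 * y) by (apply Rmult_le_pos; [apply pow_le |]; lra).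
  assert (0 <= epsa * sigB * (y ^ 3 * y)) by (apply Rmult_le_pos; nra).
  nra.
Qed.

Lemma field_s_0_ge0 x : 0 <= x -> 0 <= field_s x 0.
Proof.
  intros Hx. unfold field_s, rhs_s. apply Rdiv_le_0_compat; [| exact Hgs].
  rewrite Rabs_R0, Rabs_right by lra.
  pose proof (Rmult_le_pos _ _ Hq (Hbeta_s 0)).
  assert (0 <= x ^ 3 * x) by (apply Rmult_le_pos; [apply pow_le |]; lra).
  assert (0 <= epsa * sigB * (x ^ 3 * x)) by (apply Rmult_le_pos; nra).
  nra.
Qed.

Lemma fields_zero_equilibrium A S : field_a A S = 0 -> field_s A S = 0 ->
  is_equilibrium lam q sigB epsa beta_a beta_s A S.
Proof.
  unfold field_a, field_s, Rdiv. intros HA HS.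
  apply Rmult_integral in HA, HS.
  pose proof (Rinv_neq_0_compat ga (Rgt_not_eq _ _ Hga)).
  pose proof (Rinv_neq_0_compat gs (Rgt_not_eq _ _ Hgs)).
  split; [destruct HA as [HA | HA] | destruct HS as [HS | HS]];
    [exact HA | contradiction | exact HS | contradiction].
Qed.

(* For c in (1/2, 1/epsa) both quartic terms of c rhs_a + rhs_s are dissipative; this is
   the midpoint, and the only place where epsa < 2 is used. *)
Definition lyapunov_weight : R := (epsa + 2) / (4 * epsa).

Lemma rhs_weighted_sum_dissipative : exists D, forall x y, 0 <= x -> 0 <= y ->
  lyapunov_weight * rhs_a lam q sigB epsa beta_a x y + rhs_s lam q sigB epsa beta_s x y
  <= D - (lyapunov_weight * ga * x + gs * y).
Proof.
  set (c := lyapunov_weight). set (k := sigB * (2 - epsa) / 4).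
  assert (Hc : 0 < c) by (unfold c, lyapunov_weight; apply Rdiv_lt_0_compat; lra).
  assert (Hk : 0 < k) by (unfold k; apply Rdiv_lt_0_compat; [apply Rmult_lt_0_compat |]; lra).
  set (B := lam * Rabs (1 - c) + q * c * La + q * Ls + c * ga + gs).
  exists (2 * (k + B ^ 2 / (8 * k)) + q * c * beta_a 0 + q * beta_s 0).
  intros x y Hx Hy.
  assert (Hsum : c * rhs_a lam q sigB epsa beta_a x y + rhs_s lam q sigB epsa beta_s x y
    = lam * (1 - c) * (x - y) - 2 * k * (x ^ 3 * x) - k * (y ^ 3 * y)
      + q * c * beta_a x + q * beta_s y).
  { unfold rhs_a, rhs_s, c, k, lyapunov_weight. rewrite !Rabs_right by lra. field. lra. }
  rewrite Hsum.
  assert (Hba : q * c * beta_a x <= q * c * beta_a 0 + q * c * La * x).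
  { pose proof (Hlip_a x 0) as H. rewrite Rminus_0_r, (Rabs_right x) in H by lra.
    pose proof (Rle_abs (beta_a x - beta_a 0)). assert (0 <= q * c) by nra. nra. }
  assert (Hbs : q * beta_s y <= q * beta_s 0 + q * Ls * y).
  { pose proof (Hlip_s y 0) as H. rewrite Rminus_0_r, (Rabs_right y) in H by lra.
    pose proof (Rle_abs (beta_s y - beta_s 0)). nra. }
  assert (Hexch : lam * (1 - c) * (x - y) <= lam * Rabs (1 - c) * x + lam * Rabs (1 - c) * y).
  { assert (lam * (1 - c) * x <= lam * Rabs (1 - c) * x).
    { apply Rmult_le_compat_r; [lra |]. apply Rmult_le_compat_l; [lra | apply Rle_abs]. }
    assert (lam * (- (1 - c)) * y <= lam * Rabs (1 - c) * y).
    { apply Rmult_le_compat_r; [lra |]. rewrite <- (Rabs_Ropp (1 - c)).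
      apply Rmult_le_compat_l; [lra | apply Rle_abs]. }
    lra. }
  pose proof (quartic_dominates_linear B k x Hk). pose proof (quartic_dominates_linear B k y Hk).
  assert (EBx : B * x = lam * Rabs (1 - c) * x + q * c * La * x + q * Ls * x + c * ga * x + gs * x)
    by (unfold B; ring).
  assert (EBy : B * y = lam * Rabs (1 - c) * y + q * c * La * y + q * Ls * y + c * ga * y + gs * y)
    by (unfold B; ring).
  assert (0 <= k * (x ^ 3 * x))
    by (apply Rmult_le_pos; [lra | apply Rmult_le_pos; [apply pow_le |]; lra]).
  assert (0 <= q * Ls * x) by (apply Rmult_le_pos; nra).
  assert (0 <= q * c * La * y) by (apply Rmult_le_pos; [apply Rmult_le_pos |]; nra).
  assert (0 <= gs * x) by nra. assert (0 <= c * ga * y) by (apply Rmult_le_pos; nra).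
  lra.
Qed.

Variables (Ta0 Ts0 : R) (Ta Ts : R -> R).
Hypotheses (HTa0 : 0 <= Ta0) (HTs0 : 0 <= Ts0)
  (Hsol : is_solution ga gs lam q sigB epsa beta_a beta_s Ta0 Ts0 Ta Ts).

Lemma solution_derive t : 0 < t ->
  is_derive Ta t (field_a (Ta t) (Ts t)) /\ is_derive Ts t (field_s (Ta t) (Ts t)).
Proof. destruct Hsol as (_ & _ & _ & _ & Hd). exact (Hd t). Qed.

Lemma solution_nonneg t : 0 < t -> 0 <= Ta t /\ 0 <= Ts t.
Proof.
  intros Ht. destruct Hsol as (_ & _ & Hlim_a & Hlim_s & _).
  destruct (right_lim_continuous_bounded Ta Ta0 t Ht Hlim_a) as [Ma HMa].
  { intros y Hy. exact (is_derive_continuity_pt _ _ _ (proj1 (solution_derive y Hy))). }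
  destruct (right_lim_continuous_bounded Ts Ts0 t Ht Hlim_s) as [Ms HMs].
  { intros y Hy. exact (is_derive_continuity_pt _ _ _ (proj2 (solution_derive y Hy))). }
  set (M := Rmax Ma Ms).
  assert (Hb : forall y, 0 < y <= t -> Rabs (Ta y) <= M /\ Rabs (Ts y) <= M).
  { intros y Hy. pose proof (Rmax_l Ma Ms). pose proof (Rmax_r Ma Ms).
    pose proof (HMa y Hy). pose proof (HMs y Hy). unfold M. lra. }
  assert (HM : 0 <= M) by (pose proof (Rabs_pos (Ta t)); pose proof (Hb t ltac:(lra)); lra).
  destruct (fields_cooperative M HM) as (K & HK & Hca & Hcs).
  apply (cooperative_nonneg field_a field_s Ta Ts K M Ta0 Ts0 t HK Ht Hca Hcs
           field_a_0_ge0 field_s_0_ge0); auto.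
  intros y Hy. apply solution_derive. lra.
Qed.

Lemma solution_bounded : exists M, 0 <= M /\
  forall t, 1 <= t -> Rabs (Ta t) <= M /\ Rabs (Ts t) <= M.
Proof.
  destruct rhs_weighted_sum_dissipative as [D HD].
  set (c := lyapunov_weight).
  assert (Hc : 0 < c) by (unfold c, lyapunov_weight; apply Rdiv_lt_0_compat; lra).
  set (W := fun t => c * ga * Ta t + gs * Ts t).
  assert (HW : forall t, 1 <= t -> W t <= Rmax (W 1) D).
  { apply (derive_le_sub_bounded W (fun t => c * rhs_a lam q sigB epsa beta_a (Ta t) (Ts t)
                                           + rhs_s lam q sigB epsa beta_s (Ta t) (Ts t))).
    - intros t Ht. destruct (solution_derive t ltac:(lra)) as [Ha Hs]. evar_last.
      + apply (is_derive_plus (fun t => c * ga * Ta t) (fun t => gs * Ts t));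
          apply is_derive_scal; eassumption.
      + unfold field_a, field_s, plus; simpl. field. lra.
    - intros t Ht. destruct (solution_nonneg t ltac:(lra)). now apply HD. }
  set (Wm := Rmax (W 1) D).
  assert (HWm : 0 <= Wm).
  { destruct (solution_nonneg 1 Rlt_0_1). apply (Rle_trans _ (W 1)); [unfold W | apply Rmax_l].
    pose proof (Rmult_le_pos (c * ga) (Ta 1) ltac:(nra) ltac:(lra)). nra. }
  assert (Hcga : 0 < c * ga) by nra.
  exists (Wm / (c * ga) + Wm / gs). split.
  { pose proof (Rdiv_le_0_compat _ _ HWm Hcga). pose proof (Rdiv_le_0_compat _ _ HWm Hgs). lra. }
  intros t Ht. destruct (solution_nonneg t ltac:(lra)) as [Ha Hs]. 
  assert (HWt : c * ga * Ta t + gs * Ts t <= Wm) by exact (HW t Ht).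
  pose proof (Rmult_le_pos _ _ (Rlt_le _ _ Hcga) Ha).
  pose proof (Rmult_le_pos _ _ (Rlt_le _ _ Hgs) Hs).
  assert (Hat : Ta t <= Wm / (c * ga)) by (apply Rle_div_r; lra).
  assert (Hst : Ts t <= Wm / gs) by (apply Rle_div_r; lra).
  pose proof (Rdiv_le_0_compat _ _ HWm Hcga). pose proof (Rdiv_le_0_compat _ _ HWm Hgs).
  rewrite !Rabs_right by lra. lra.
Qed.

Lemma solution_cooperative : exists K M, cooperative_solution 1 K M field_a field_s Ta Ts.
Proof.
  destruct solution_bounded as (M & HM & Hb).
  destruct (fields_cooperative M HM) as (K & HK & Hca & Hcs).
  exists K, M. split; auto.
  intros t Ht. apply solution_derive. lra.
Qed.

End Model.

Theorem proposition2p2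
  (ga gs lam q sigB epsa : R) (beta_a beta_s : R -> R) (Ta0 Ts0 : R)
  (Ta Ts : R -> R) :
  0 < ga -> 0 < gs -> 0 <= lam -> 0 < q -> 0 < sigB ->
  0 < epsa < 2 ->
  globally_lipschitz beta_a -> globally_lipschitz beta_s ->
  (forall x : R, 0 <= beta_a x) -> (forall x : R, 0 < beta_s x) ->
  0 <= Ta0 -> 0 <= Ts0 ->
  is_solution ga gs lam q sigB epsa beta_a beta_s Ta0 Ts0 Ta Ts ->
  exists a s : R,
    is_equilibrium lam q sigB epsa beta_a beta_s a s /\
    is_lim Ta p_infty (Finite a) /\ is_lim Ts p_infty (Finite s).
Proof.
  intros Hga Hgs Hlam Hq HsigB Hepsa [La [HLa Hlip_a]] [Ls [HLs Hlip_s]] Hbeta_a Hbeta_s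
    HTa0 HTs0 Hsol.
  destruct (solution_cooperative ga gs lam q sigB epsa La Ls beta_a beta_s Hga Hgs Hlam
              (Rlt_le _ _ Hq) HsigB Hepsa HLa HLs Hlip_a Hlip_s Hbeta_a
              (fun x => Rlt_le _ _ (Hbeta_s x)) Ta0 Ts0 Ta Ts HTa0 HTs0 Hsol) as (K & M & Hcoop).
  destruct (cooperative_solution_cvg _ _ _ _ _ _ _ Hcoop) as (A & S & HA & HS & HlimA & HlimS).
  exists A, S. split; [| split; assumption].
  exact (fields_zero_equilibrium ga gs lam q sigB epsa beta_a beta_s Hga Hgs A S HA HS).
Qed.
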